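(* For each $t\in\{0,1,\dots,T\}$ and every state $(\bm{x},k)=((x_1,\dots,x_N),k)\in\mathbb{Z}^N\times\mathbb{N}_0$, $$V^N_t(\bm{x},k)=\sum_{i=1}^N\tilde V^{N,i}_t(x_i,k).$$
   Context: Spare parts setting. Fix integers $N\ge1$, $T\ge1$, reals $\alpha_0,\beta_0>0$, and for each $i\in\mathcal{N}=\{1,\dots,N\}$ unit costs $c_v^i,c_h^i,c_b^i>0$ (transportation, holding, backorder) with $c_b^i>c_v^i$. $\mathbb{N}_0=\{0,1,2,\dots\}$, $y^+=\max(y,0)$. For real $r>0$ and $p\in(0,1)$, $NB(r,p)$ is the distribution on $\mathbb{N}_0$ with $P(n)=\frac{\Gamma(n+r)}{\Gamma(r)n!}p^r(1-p)^n$; $NB(0,p)$ is the point mass at $0$. For $t\in\{0,\dots,T\}$ let $p_t=\frac{\beta_0+Nt}{\beta_0+Nt+1}$. At epoch $t$ and statistic $k$ let $Z\sim NB(\alpha_0+k,p_t)$, $K\sim NB((N-1)(\alpha_0+k),p_t)$ independent, and set $C_i(a,x,k)=c_v^i(a-x)+c_h^i\mathbb{E}[(a-Z)^+]+c_b^i\mathbb{E}[(Z-a)^+]$ for integers $a\ge x$. Original MDP: state $(\bm{x},k)\in\mathbb{Z}^N\times\mathbb{N}_0$ ($x_i$ = net inventory of warehouse $i$, $k$ = total demand observed); actions $\bm{a}\in\mathbb{Z}^N$ with $a_i\ge x_i$; $V^N_T\equiv0$ and for $t=T-1,\dots,0$: $V^N_t(\bm{x},k)=\min_{\bm{a}}\{\sum_iC_i(a_i,x_i,k)+\mathbb{E}[V^N_{t+1}(\bm{a}-\bm{Z},k+\sum_iZ_i)]\}$,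 with $Z_1,\dots,Z_N$ i.i.d. $NB(\alpha_0+k,p_t)$. Alternative MDP: $\tilde V^{N,i}_T\equiv0$ and for $t=T-1,\dots,0$, $(x,k)\in\mathbb{Z}\times\mathbb{N}_0$: $\tilde V^{N,i}_t(x,k)=\min_{a\in\mathbb{Z},a\ge x}\{C_i(a,x,k)+\mathbb{E}[\tilde V^{N,i}_{t+1}(a-Z,k+Z+K)]\}$. *)

From HB Require Import structures.
From mathcomp Require Import all_boot all_order all_algebra.
From mathcomp Require Import all_classical all_reals all_analysis.
Set Implicit Arguments. Unset Strict Implicit. Unset Printing Implicit Defensive.
Import Order.TTheory GRing.Theory Num.Theory.
Local Open Scope ring_scope.
Local Open Scope classical_set_scope.

Section SpareParts.
Variable R : realType.

(* Negative binomial pmf NB(r,p) at n: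
   Gamma(n+r)/(Gamma(r) n!) p^r (1-p)^n, where Gamma(n+r)/Gamma(r) is written
   out as the rising factorial prod_{j<n} (r+j).  For r = 0 this is the point
   mass at 0 (the product contains the factor r = 0 as soon as n >= 1). *)
Definition nb_pmf (r p : R) (n : nat) : R :=
  (\prod_(j < n) (r + j%:R)) / (n`!)%:R * powR p r * (1 - p) ^+ n.

Definition p_ep (beta0 : R) (N t : nat) : R :=
  (beta0 + (N * t)%:R) / (beta0 + (N * t)%:R + 1).

Definition E_nb (r p : R) (f : nat -> \bar R) : \bar R :=
  (\esum_(n in [set: nat]) ((nb_pmf r p n)%:E * f n))%E.

Definition pospart (y : int) : R := Num.max 0 (y%:~R).

Definition cost (alpha0 beta0 : R) (N t : nat) (cv ch cb : R)
    (a x : int) (k : nat) : \bar R :=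
  let r := alpha0 + k%:R in
  let p := p_ep beta0 N t in
  ((cv * (a - x)%:~R)%:E
   + ch%:E * E_nb r p (fun z => (pospart (a - z%:Z))%:E)
   + cb%:E * E_nb r p (fun z => (pospart (z%:Z - a))%:E))%E.

(* Z_1..Z_N i.i.d. NB(alpha0+k, p_t); the expectation is the sum over all
   outcomes z in N_0^N of prod_i P(z_i) * V_{t+1}(a - z, k + sum_i z_i).
   The "min" over actions is the infimum over {a in Z^N | a_i >= x_i}. *)
Definition bellman_orig (N : nat) (alpha0 beta0 : R) (cv ch cb : 'I_N -> R)
    (t : nat) (W : ('I_N -> int) -> nat -> \bar R)
    (x : 'I_N -> int) (k : nat) : \bar R :=
  let r := alpha0 + k%:R in
  let p := p_ep beta0 N t in
  ereal_inf [set (\sum_(i < N) cost alpha0 beta0 N t (cv i) (ch i) (cb i) (a i) (x i) k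
                  + \esum_(z in [set: {ffun 'I_N -> nat}])
                      ((\prod_(i < N) nb_pmf r p (z i))%:E
                       * W (fun i => (a i - (z i)%:Z)%R) (k + \sum_(i < N) z i)%N))%E
            | a in [set a : 'I_N -> int | forall i, x i <= a i]].

(* vorig n t = value function at epoch t when n epochs remain (t + n = T). *)
Fixpoint vorig (N : nat) (alpha0 beta0 : R) (cv ch cb : 'I_N -> R)
    (n t : nat) : ('I_N -> int) -> nat -> \bar R :=
  match n with
  | 0 => fun _ _ => 0%E
  | n'.+1 => bellman_orig alpha0 beta0 cv ch cb t
               (vorig alpha0 beta0 cv ch cb n' t.+1)
  end.

Definition V_orig (N T : nat) (alpha0 beta0 : R) (cv ch cb : 'I_N -> R)
    (t : nat) : ('I_N -> int) -> nat -> \bar R :=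
  vorig alpha0 beta0 cv ch cb (T - t) t.

(* Z ~ NB(alpha0+k, p_t), K ~ NB((N-1)(alpha0+k), p_t) independent. *)
Definition bellman_alt (N : nat) (alpha0 beta0 cv ch cb : R)
    (t : nat) (W : int -> nat -> \bar R) (x : int) (k : nat) : \bar R :=
  let r := alpha0 + k%:R in
  let p := p_ep beta0 N t in
  ereal_inf [set (cost alpha0 beta0 N t cv ch cb a x k
                  + \esum_(zk in [set: nat * nat])
                      ((nb_pmf r p zk.1 * nb_pmf ((N - 1)%:R * r) p zk.2)%:E
                       * W (a - (zk.1)%:Z)%R (k + zk.1 + zk.2)%N))%E
            | a in [set a : int | x <= a]].

Fixpoint valt (N : nat) (alpha0 beta0 cv ch cb : R) (n t : nat)
    : int -> nat -> \bar R :=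
  match n with
  | 0 => fun _ _ => 0%E
  | n'.+1 => bellman_alt N alpha0 beta0 cv ch cb t
               (valt N alpha0 beta0 cv ch cb n' t.+1)
  end.

Definition V_alt (N T : nat) (alpha0 beta0 : R) (cv ch cb : 'I_N -> R)
    (i : 'I_N) (t : nat) : int -> nat -> \bar R :=
  valt N alpha0 beta0 (cv i) (ch i) (cb i) (T - t) t.

End SpareParts.

(* Since the statistic k only enters through the demand distribution and the
   one-step cost is a sum of per-warehouse costs, the original Bellman operator
   preserves separable value functions: the infimum over the box a >= x of a
   separable sum is the sum of the coordinatewise infima, and the expectation of
   sum_i W_i(a_i - Z_i, k + sum_j Z_j) splits into N terms, the i-th of which
   depends only on (Z_i, sum_{j <> i} Z_j).  With Z_j i.i.d. NB(r, p), this pair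
   has law NB(r, p) x NB((N - 1) r, p), because negative binomials with a common
   p are closed under convolution -- which, on the pmfs, is Vandermonde's
   identity for rising factorials. *)

From HB Require Import structures.
From mathcomp Require Import all_boot all_order all_algebra.
From mathcomp Require Import all_classical all_reals all_analysis.
From mathcomp Require Import ring zify.
Import Order.TTheory GRing.Theory Num.Theory.

Set Implicit Arguments. Unset Strict Implicit. Unset Printing Implicit Defensive.
Local Open Scope ring_scope.
Local Open Scope classical_set_scope.

Section RisingFactorial.
Variable R : comNzRingType.

Definition rising (r : R) (n : nat) : R := \prod_(j < n) (r + j%:R).

Lemma rising0 r : rising r 0%N = 1.
Proof. by rewrite /rising big_ord0. Qed.

Lemma risingS r n : rising r n.+1 = rising r n * (r + n%:R).
Proof. by rewrite /rising big_ord_recr. Qed.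

Lemma risingD r s n :
  rising (r + s) n = \sum_(x < n.+1) 'C(n, x)%:R * rising r x * rising s (n - x).
Proof.
apply/esym; elim: n => [|n IH].
  by rewrite big_ord_recl big_ord0 !rising0 bin0 addr0 !mulr1.
have split_factor : \sum_(i < n.+1) 'C(n, i)%:R * rising r i * rising s (n - i) * (r + s + n%:R)
  = \sum_(i < n.+1) 'C(n, i)%:R * rising r i.+1 * rising s (n - i)
    + \sum_(i < n.+1) 'C(n, i)%:R * rising r i * rising s (n.+1 - i).
  rewrite -big_split /=; apply: eq_bigr => i _.
  have hi : (i <= n)%N by rewrite -ltnS.
  rewrite risingS subSn // risingS natrB //; ring.
rewrite risingS -IH mulr_suml split_factor big_ord_recl bin0 rising0 subn0.
under eq_bigr do rewrite binS natrD subSS !mulrDl.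
rewrite big_split /= [X in _ = _ + X]big_ord_recl bin0 rising0 subn0.
rewrite [in LHS](big_ord_recr n) /= bin_small // !mul0r addr0.
by rewrite [in RHS]addrC -!addrA.
Qed.

End RisingFactorial.

Section NegativeBinomial.
Variable R : realType.
Implicit Types (r s p : R) (n : nat).

Lemma nb_pmfE r p n : nb_pmf r p n = rising r n / (n`!)%:R * powR p r * (1 - p) ^+ n.
Proof. by []. Qed.

Lemma nb_pmf_ge0 r p n : 0 <= r -> p <= 1 -> 0 <= nb_pmf r p n.
Proof.
move=> r0 p1; rewrite nb_pmfE; apply: mulr_ge0; last by rewrite exprn_ge0 // subr_ge0.
apply: mulr_ge0; last exact: powR_ge0.
by apply: divr_ge0 => //; apply: prodr_ge0 => j _; exact: addr_ge0.
Qed.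

Lemma nb_pmf0 p n : 0 < p -> nb_pmf 0 p n = (n == 0%N)%:R.
Proof.
move=> p0; case: n => [|n]; first by rewrite nb_pmfE rising0 powRr0 !mulr1 divr1.
by rewrite nb_pmfE /rising big_ord_recl /= add0r !mul0r.
Qed.

Lemma nb_pmf_conv r s p n : 0 < p ->
  \sum_(x < n.+1) nb_pmf r p x * nb_pmf s p (n - x) = nb_pmf (r + s) p n.
Proof.
move=> p0.
have term x : (x <= n)%N -> nb_pmf r p x * nb_pmf s p (n - x) =
    'C(n, x)%:R * rising r x * rising s (n - x)
    * ((n`!)%:R^-1 * powR p (r + s) * (1 - p) ^+ n).
  move=> xn; rewrite !nb_pmfE powRD; last by rewrite implybE (gt_eqF p0) orbT.
  have -> : (1 - p) ^+ n = (1 - p) ^+ x * (1 - p) ^+ (n - x) by rewrite -exprD subnKC.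
  have -> : (n`!)%:R = 'C(n, x)%:R * ((x`!)%:R * ((n - x)`!)%:R) :> R
    by rewrite -!natrM bin_fact.
  have fx : (x`!)%:R != 0 :> R by rewrite pnatr_eq0 -lt0n fact_gt0.
  have fnx : ((n - x)`!)%:R != 0 :> R by rewrite pnatr_eq0 -lt0n fact_gt0.
  have bnx : 'C(n, x)%:R != 0 :> R by rewrite pnatr_eq0 -lt0n bin_gt0.
  by field; rewrite fx fnx bnx.
rewrite (eq_bigr _ (fun (x : 'I_n.+1) _ => term x (ltnSE (ltn_ord x)))).
by rewrite -mulr_suml -risingD nb_pmfE !mulrA.
Qed.

End NegativeBinomial.

Section ExtendedSums.
Variable R : realType.
Local Open Scope ereal_scope.

Lemma ge0_esumZl (T : choiceType) (S : set T) (c : R) (f : T -> \bar R) :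
  (0 <= c)%R -> (forall x, 0 <= f x) ->
  \esum_(i in S) (c%:E * f i) = c%:E * \esum_(i in S) f i.
Proof.
move=> c0 f0; rewrite /esum -ereal_supZl //; last first.
  by apply/set0P; exists 0; exists set0; [exact: fsets_set0 | rewrite fsbig_set0].
congr ereal_sup; apply/seteqP; split => y /=.
- case=> A hA <-; exists (\sum_(i \in A) f i); first by exists A.
  by rewrite ge0_mule_fsumr.
- by case=> _ [A hA <-] <-; exists A => //; rewrite ge0_mule_fsumr.
Qed.

Lemma ge0_esum_pairZl (I T : choiceType) (A : set I) (S : set T)
    (c : I -> R) (F : I -> T -> \bar R) :
  (forall x, 0 <= c x)%R -> (forall x s, 0 <= F x s) ->
  \esum_(xs in A `*`` (fun _ => S)) ((c xs.1)%:E * F xs.1 xs.2)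
  = \esum_(x in A) ((c x)%:E * \esum_(s in S) F x s).
Proof.
move=> c0 F0; rewrite -(@esum_esum _ _ _ A (fun _ => S) (fun x s => (c x)%:E * F x s)).
  by apply: eq_esum => x _; rewrite ge0_esumZl.
by move=> x s _ _; rewrite mule_ge0 ?lee_fin.
Qed.

Lemma setTXR_setT (I J : Type) : [set: I] `*`` (fun _ => [set: J]) = [set: I * J].
Proof. by apply/seteqP; split. Qed.

Lemma ereal_inf_sum (N : nat) (x : 'I_N -> int) (G : 'I_N -> int -> \bar R) :
  (forall i b, (x i <= b)%R -> 0 <= G i b) ->
  ereal_inf [set \sum_(i < N) G i (a i)
            | a in [set a : 'I_N -> int | forall i, (x i <= a i)%R]]
  = \sum_(i < N) ereal_inf [set G i b | b in [set b : int | (x i <= b)%R]].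
Proof.
move=> G0; set I := fun i => ereal_inf [set G i b | b in [set b : int | (x i <= b)%R]].
rewrite -/(\sum_(i < N) I i).
have I0 i : 0 <= I i by apply: le_ereal_inf_tmp => _ [b hb <-]; exact: G0.
apply/eqP; rewrite eq_le; apply/andP; split; last first.
  apply: le_ereal_inf_tmp => _ [a ha <-]; apply: lee_sum => i _.
  by apply: ereal_inf_lbound; exists (a i) => //; exact: ha.
have [[i0 Ii0]|Ifin] := pselect (exists i, I i = +oo).
  rewrite (bigD1 i0) //= Ii0 addye ?leey //.
  have : 0 <= \sum_(i < N | i != i0) I i by apply: sume_ge0 => i _.
  by case: (\sum_(i < N | i != i0) I i).
have fin i : I i \is a fin_num.
  rewrite ge0_fin_numE // lt_neqAle leey andbT.
  by apply/eqP => Ii; apply: Ifin; exists i.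
(* approximate each infimum within e / (N + 1) *)
apply/lee_addgt0Pr => e e0; set e' := (e / N.+1%:R)%R.
have e'0 : (0 < e')%R by rewrite divr_gt0 // ltr0n.
have near_inf i : exists b, (x i <= b)%R /\ G i b < I i + e'%:E.
  have [_ [b hb <-] Gb] := lb_ereal_inf_adherent e'0 (fin i).
  by exists b.
have [f hf] := choice near_inf.
apply: ge_ereal_inf; exists (\sum_(i < N) G i (f i)).
  by exists f => // i; case: (hf i).
apply: (@le_trans _ _ (\sum_(i < N) (I i + e'%:E))).
  by apply: lee_sum => i _; apply: ltW; case: (hf i).
rewrite big_split /= leeD2l // sumEFin lee_fin sumr_const card_ord.
rewrite -mulr_natr /e' -mulrA ler_piMr ?ltW // mulrC ltr_pdivrMr ?ltr0n //.
by rewrite mul1r ltr_nat.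
Qed.

End ExtendedSums.

Section NegativeBinomialSums.
Variable R : realType.
Variable p : R.
Hypotheses (p_gt0 : (0 < p)%R) (p_le1 : (p <= 1)%R).
Local Open Scope ereal_scope.

Lemma esum_nb_pair (r s : R) (g : nat -> \bar R) :
  (0 <= r)%R -> (0 <= s)%R -> (forall n, 0 <= g n) ->
  \esum_(xm in [set: nat * nat]) ((nb_pmf r p xm.1 * nb_pmf s p xm.2)%:E * g (xm.1 + xm.2)%N)
  = \esum_(n in [set: nat]) ((nb_pmf (r + s) p n)%:E * g n).
Proof.
move=> r0 s0 g0.
have weight_ge0 x y : (0 <= nb_pmf r p x * nb_pmf s p y)%R.
  by rewrite mulr_ge0 // nb_pmf_ge0.
rewrite (reindex_esum ([set: nat] `*`` (fun n => `I_n.+1)) _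
   (fun nx => (nx.2, nx.1 - nx.2)%N)); last first.
  split=> [[n x] _ //| [n x] [n' x'] /set_mem [_ hx] /set_mem [_ hx'] [ex e] |].
  - by subst x'; rewrite /= in hx hx' e; congr pair; lia.
  - move=> [x m] _; exists (x + m, x)%N; last by rewrite /= addKn.
    by split => //=; rewrite ltnS leq_addr.
rewrite -(@esum_esum _ _ _ [set: nat] (fun n => `I_n.+1)
   (fun n x => (nb_pmf r p x * nb_pmf s p (n - x))%:E * g (x + (n - x))%N)); last first.
  by move=> n x _ _; rewrite mule_ge0 ?lee_fin.
apply: eq_esum => n _; rewrite esum_fset //; last first.
  by move=> x _; rewrite mule_ge0 ?lee_fin.
rewrite (eq_fsbigr (fun x => (nb_pmf r p x * nb_pmf s p (n - x))%:E * g n)); last first.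
  by move=> x; rewrite inE /= ltnS => xn; rewrite subnKC.
rewrite -ge0_mule_fsuml; last by move=> x; rewrite lee_fin.
by rewrite -fsbig_ord sumEFin nb_pmf_conv.
Qed.

Lemma esum_nb_seq (M : nat) (r : R) (g : nat -> \bar R) :
  (0 <= r)%R -> (forall n, 0 <= g n) ->
  \esum_(s in [set s : seq nat | size s = M])
     ((\prod_(x <- s) nb_pmf r p x)%:E * g (sumn s))
  = \esum_(m in [set: nat]) ((nb_pmf (M%:R * r) p m)%:E * g m).
Proof.
move=> r0; elim: M g => [|M IH] g g0.
  have -> : [set s : seq nat | size s = 0%N] = [set [::]].
    by apply/seteqP; split => s /=; [move/size0nil | move=> ->].
  rewrite esum_set1 big_nil ?mul1e // mul0r.
  under eq_esum do rewrite nb_pmf0 //.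
  have -> : \esum_(m in [set: nat]) (((m == 0%N)%:R)%:E * g m)
      = \esum_(m in [set 0%N]) (((m == 0%N)%:R)%:E * g m).
    rewrite [RHS]esum_mkcond; apply: eq_esum => -[|m] _; first by rewrite mem_set.
    by rewrite mul0e; case: ifP.
  by rewrite esum_set1 ?mul1e.
have prod_ge0 (s : seq nat) : (0 <= \prod_(x <- s) nb_pmf r p x)%R.
  by apply: prodr_ge0 => y _; exact: nb_pmf_ge0.
rewrite (reindex_esum ([set: nat] `*`` (fun _ => [set s : seq nat | size s = M])) _
   (fun xs => xs.1 :: xs.2)); last first.
  split=> [[x s] [_ /= ->] //| [x s] [x' s'] _ _ /= [-> ->] //| [|x s] //= [hs]].
  by exists (x, s).
under eq_esum => xs _ do rewrite big_cons /= EFinM -muleA.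
rewrite (@ge0_esum_pairZl _ _ _ [set: nat] [set s | size s = M] (nb_pmf r p)
  (fun x s => (\prod_(y <- s) nb_pmf r p y)%:E * g (x + sumn s)%N)); last 2 first.
- by move=> x; exact: nb_pmf_ge0.
- by move=> x s; rewrite mule_ge0 ?lee_fin.
under eq_esum => x _ do rewrite (IH (fun m => g (x + m)%N)) //.
rewrite -(@ge0_esum_pairZl _ _ _ [set: nat] [set: nat] (nb_pmf r p)
  (fun x m => (nb_pmf (M%:R * r) p m)%:E * g (x + m)%N)); last 2 first.
- by move=> x; exact: nb_pmf_ge0.
- by move=> x m; rewrite mule_ge0 ?lee_fin // nb_pmf_ge0 // mulr_ge0.
have -> : (M.+1%:R * r = r + M%:R * r)%R by rewrite -addn1 natrD mulrDl mul1r addrC.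
rewrite setTXR_setT -esum_nb_pair ?mulr_ge0 //.
by apply: eq_esum => xm _; rewrite EFinM muleA.
Qed.

End NegativeBinomialSums.

Lemma map_nth_index (T : eqType) (U : Type) (x0 : U) (L : seq T) (s : seq U) :
  uniq L -> size s = size L -> [seq nth x0 s (index j L) | j <- L] = s.
Proof.
elim: L s => [|a L IH] [|b s] //= /andP[aL uL] [hs].
rewrite eqxx /=; congr cons; rewrite -[RHS](IH s uL hs).
by apply/eq_in_map => j jL /=; rewrite ifN //; apply: contraNneq aL => ->.
Qed.

Section Marginal.
Variables (N : nat) (i : 'I_N).

Definition others : seq 'I_N := [seq j <- enum 'I_N | j != i].

Lemma others_uniq : uniq others.
Proof. by rewrite filter_uniq // enum_uniq. Qed.

Lemma mem_others j : (j \in others) = (j != i).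
Proof. by rewrite mem_filter mem_enum andbT. Qed.

Lemma size_others : size others = (N - 1)%N.
Proof.
rewrite /others -rem_filter ?enum_uniq //.
by rewrite size_rem ?mem_enum // size_enum_ord subn1.
Qed.

Definition splice (ns : nat * seq nat) : {ffun 'I_N -> nat} :=
  [ffun j => if j == i then ns.1 else nth 0%N ns.2 (index j others)].

Lemma big_splice (T : Type) (idx : T) (op : Monoid.com_law idx) (F : nat -> T) n s :
  size s = (N - 1)%N ->
  \big[op/idx]_(j < N) F (splice (n, s) j) = op (F n) (\big[op/idx]_(x <- s) F x).
Proof.
move=> hs; rewrite (bigD1 i) //= ffunE eqxx; congr (op _ _).
rewrite [LHS](_ : _ = \big[op/idx]_(j <- others) F (splice (n, s) j)); last first.
  by rewrite /others big_filter [index_enum _]unlock -enumT.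
rewrite -{2}(map_nth_index 0%N others_uniq (etrans hs (esym size_others))) big_map.
apply: eq_big_seq => j; rewrite mem_others => ji.
by rewrite ffunE (negPf ji).
Qed.

Lemma splice_bij :
  set_bij ([set: nat] `*`` (fun _ => [set s : seq nat | size s = (N - 1)%N]))
          [set: {ffun 'I_N -> nat}] splice.
Proof.
have sizeE s : size s = (N - 1)%N -> size s = size others by rewrite size_others.
split=> // [[n s] [n' s'] /set_mem [_ /= /sizeE hs] /set_mem [_ /= /sizeE hs'] E | z _].
- have -> : n = n' by move: (congr1 (fun f : {ffun 'I_N -> nat} => f i) E); rewrite !ffunE eqxx.
  congr pair; rewrite -(map_nth_index 0%N others_uniq hs) -(map_nth_index 0%N others_uniq hs').
  apply/eq_in_map => j; rewrite mem_others => ji.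
  by move: (congr1 (fun f : {ffun 'I_N -> nat} => f j) E); rewrite !ffunE (negPf ji).
- exists (z i, [seq z j | j <- others]); first by split => //=; rewrite size_map size_others.
  apply/ffunP => j; rewrite ffunE /=; case: eqP => [-> //|/eqP ji].
  have jo : j \in others by rewrite mem_others.
  by rewrite (nth_map i) ?index_mem // nth_index.
Qed.

Variable R : realType.
Variables (r p : R).
Hypotheses (r_ge0 : (0 <= r)%R) (p_gt0 : (0 < p)%R) (p_le1 : (p <= 1)%R).
Local Open Scope ereal_scope.

Lemma esum_nb_marginal (h : nat -> nat -> \bar R) : (forall a b, 0 <= h a b) ->
  \esum_(z in [set: {ffun 'I_N -> nat}])
     ((\prod_(j < N) nb_pmf r p (z j))%:E * h (z i) (\sum_(j < N) z j)%N)
  = \esum_(zk in [set: nat * nat])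
     ((nb_pmf r p zk.1 * nb_pmf ((N - 1)%:R * r) p zk.2)%:E * h zk.1 (zk.1 + zk.2)%N).
Proof.
move=> h0; rewrite (reindex_esum _ _ _ _ splice_bij).
have prod_ge0 (s : seq nat) : (0 <= \prod_(x <- s) nb_pmf r p x)%R.
  by apply: prodr_ge0 => y _; exact: nb_pmf_ge0.
rewrite (eq_esum (b := fun ns => (nb_pmf r p ns.1)%:E
    * ((\prod_(x <- ns.2) nb_pmf r p x)%:E * h ns.1 (ns.1 + sumn ns.2)%N))); last first.
  move=> [n s] [_ /= hs]; rewrite big_splice // ffunE eqxx.
  by rewrite (@big_splice nat 0%N addn id n s hs) /= -sumnE EFinM muleA.
rewrite (@ge0_esum_pairZl _ _ _ [set: nat] [set s | size s = (N - 1)%N] (nb_pmf r p)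
  (fun n s => (\prod_(x <- s) nb_pmf r p x)%:E * h n (n + sumn s)%N)); last 2 first.
- by move=> n; exact: nb_pmf_ge0.
- by move=> n s; rewrite mule_ge0 ?lee_fin.
under eq_esum => n _ do
  rewrite (esum_nb_seq (g := fun m => h n (n + m)%N) p_gt0 p_le1 (N - 1) r_ge0) //.
rewrite -(@ge0_esum_pairZl _ _ _ [set: nat] [set: nat] (nb_pmf r p)
  (fun n m => (nb_pmf ((N - 1)%:R * r) p m)%:E * h n (n + m)%N)); last 2 first.
- by move=> n; exact: nb_pmf_ge0.
- by move=> n m; rewrite mule_ge0 ?lee_fin // nb_pmf_ge0 // mulr_ge0.
by rewrite setTXR_setT; apply: eq_esum => zk _; rewrite EFinM muleA.
Qed.

End Marginal.

Section Separation.
Variable R : realType.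
Variables (N : nat) (alpha0 beta0 : R) (cv ch cb : 'I_N -> R).
Hypotheses (alpha0_ge0 : (0 <= alpha0)%R) (beta0_gt0 : (0 < beta0)%R).
Hypotheses (cv_ge0 : forall i, (0 <= cv i)%R) (ch_ge0 : forall i, (0 <= ch i)%R)
  (cb_ge0 : forall i, (0 <= cb i)%R).
Local Open Scope ereal_scope.

Lemma p_ep_gt0 t : (0 < p_ep beta0 N t)%R.
Proof. by rewrite /p_ep divr_gt0 // ?ltr_wpDr. Qed.

Lemma p_ep_le1 t : (p_ep beta0 N t <= 1)%R.
Proof. by rewrite /p_ep ler_pdivrMr ?mul1r ?lerDl // addr_gt0 // ltr_wpDr. Qed.

Lemma cost_ge0 t i (a x : int) k : (x <= a)%R ->
  0 <= cost alpha0 beta0 N t (cv i) (ch i) (cb i) a x k.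
Proof.
move=> xa; have r_ge0 : (0 <= alpha0 + k%:R)%R by rewrite addr_ge0.
have E_ge0 f : (forall n, 0 <= f n) -> 0 <= E_nb (alpha0 + k%:R) (p_ep beta0 N t) f.
  by move=> f0; apply: esum_ge0 => n _; rewrite mule_ge0 // lee_fin nb_pmf_ge0 ?p_ep_le1.
have pospart_ge0 (y : int) : 0 <= (pospart R y)%:E by rewrite lee_fin le_max lexx.
rewrite /cost /=; apply: adde_ge0; first apply: adde_ge0.
- by rewrite lee_fin mulr_ge0 ?cv_ge0 // ler0z subr_ge0.
- by rewrite mule_ge0 ?lee_fin ?ch_ge0 ?E_ge0.
- by rewrite mule_ge0 ?lee_fin ?cb_ge0 ?E_ge0.
Qed.

Lemma valt_ge0 i n t y k :
  0 <= valt N alpha0 beta0 (cv i) (ch i) (cb i) n t y k.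
Proof.
elim: n t y k => [//|n IH] t y k /=.
apply: le_ereal_inf_tmp => _ [a ya <-]; apply: adde_ge0; first exact: cost_ge0.
apply: esum_ge0 => zk _; rewrite mule_ge0 // lee_fin mulr_ge0 // nb_pmf_ge0 ?p_ep_le1 //.
  exact: addr_ge0.
by rewrite !mulr_ge0 // addr_ge0.
Qed.

Lemma bellman_orig_separable t (W : 'I_N -> int -> nat -> \bar R) x k :
  (forall i y k', 0 <= W i y k') ->
  bellman_orig alpha0 beta0 cv ch cb t (fun y k' => \sum_(i < N) W i (y i) k') x k
  = \sum_(i < N) bellman_alt N alpha0 beta0 (cv i) (ch i) (cb i) t (W i) (x i) k.
Proof.
move=> W_ge0; set r := (alpha0 + k%:R)%R; set p := p_ep beta0 N t.
have r_ge0 : (0 <= r)%R by rewrite addr_ge0.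
rewrite /bellman_orig /bellman_alt -/r -/p -ereal_inf_sum; last first.
  move=> i b xb; apply: adde_ge0; first exact: cost_ge0.
  apply: esum_ge0 => zk _; rewrite mule_ge0 // lee_fin mulr_ge0 // nb_pmf_ge0 ?p_ep_le1 //.
  by rewrite mulr_ge0.
congr ereal_inf; apply: eq_imagel => a xa /=.
rewrite [RHS]big_split; congr (_ + _).
under eq_esum => z _ do rewrite ge0_sume_distrr //.
rewrite esum_sum; last first.
  move=> z i _ _; apply: mule_ge0 => //; rewrite lee_fin.
  by apply: prodr_ge0 => j _; rewrite nb_pmf_ge0 ?p_ep_le1.
apply: eq_bigr => i _.
rewrite (@esum_nb_marginal N i R r p r_ge0 (p_ep_gt0 t) (p_ep_le1 t)
  (fun m s => W i (a i - m%:Z)%R (k + s)%N)) //.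
by apply: eq_esum => zk _; rewrite addnA.
Qed.

Lemma vorig_sum_valt n t x k :
  vorig alpha0 beta0 cv ch cb n t x k
  = \sum_(i < N) valt N alpha0 beta0 (cv i) (ch i) (cb i) n t (x i) k.
Proof.
elim: n t x k => [|n IH] t x k /=; first by rewrite big1.
have -> : vorig alpha0 beta0 cv ch cb n t.+1
    = fun y k' => \sum_(i < N) valt N alpha0 beta0 (cv i) (ch i) (cb i) n t.+1 (y i) k'.
  by apply/funext => y; apply/funext => k'; exact: IH.
by apply: bellman_orig_separable => i y k'; exact: valt_ge0.
Qed.

End Separation.

Theorem theorem2 (R : realType) (N T : nat) (alpha0 beta0 : R)
    (cv ch cb : 'I_N -> R)
    (hN : (1 <= N)%N) (hT : (1 <= T)%N)
    (ha : 0 < alpha0) (hb : 0 < beta0)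
    (hcv : forall i, 0 < cv i) (hch : forall i, 0 < ch i) (hcb : forall i, 0 < cb i)
    (hbv : forall i, cv i < cb i)
    (t : nat) (ht : (t <= T)%N) (x : 'I_N -> int) (k : nat) :
  V_orig T alpha0 beta0 cv ch cb t x k
  = (\sum_(i < N) V_alt T alpha0 beta0 cv ch cb i t (x i) k)%E.
Proof.
(* only nonnegativity of the parameters is needed; [hN], [hT], [hbv], [ht] are not *)
exact: (vorig_sum_valt (ltW ha) hb (fun i => ltW (hcv i)) (fun i => ltW (hch i))
  (fun i => ltW (hcb i))).
Qed.
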